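(* Let $d\ge0$ and let $a\in\mathbb K[A]$ be an irreducible, homogeneous, isobaric element invariant under $UT_3$ (i.e. $D_1(a)=D_2(a)=D_3(a)=0$) with $\mathrm{ord}_1(a)=0$ and $\mathrm{ord}_2(a)=d$. Then: (i) the vector space $\bar C_d$ spanned by the elements $\frac{(-1)^{i+j}}{d(d-1)\cdots(d-i-j+1)}\hat D_2^{j}\hat D_3^{i}(a)$, $i+j\le d$, is an irreducible $\mathfrak{sl}_3$-submodule of $\mathbb K[A]$ isomorphic to $\Gamma_{0,d}$; (ii) the element $$\sum_{i+j\le d}\frac{(-1)^{i+j}}{i!\,j!}\,\hat D_2^{j}\hat D_3^{i}(a)\,u_3^{d-(i+j)}u_1^{i}u_2^{j}\in\mathbb K[A,u_1,u_2,u_3]$$ (the Casimir element of $\bar C_d$ and $S^d(\langle u_1,u_2,u_3\rangle)$ with respect to dual bases) is a contravariant of order $d$ of the ternary form of degree $n$.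
   Context: $\mathbb K$ is a field of characteristic $0$, $n\ge1$, $\mathbb K[A]=\mathbb K[a_{i,j}: i,j\ge0,\ i+j\le n]$ is the coordinate ring of the space of ternary forms $\sum_{i+j\le n}\frac{n!}{i!j!(n-i-j)!}a_{i,j}x_1^{n-i-j}x_2^ix_3^j$. $\mathfrak{sl}_3$ acts by derivations on $\mathbb K[A,u_1,u_2,u_3]$; the operators for $E_{12},E_{23},E_{13},E_{21},E_{32},E_{31},E_{11}-E_{22},E_{22}-E_{33}$ are $D_1,D_2,D_3,\hat D_1,\hat D_2,\hat D_3,E_1,E_2$. On generators of $\mathbb K[A]$ (with $a_{i,j}=0$ if an index is negative or $i+j>n$): $D_1(a_{i,j})=i a_{i-1,j}$, $D_2(a_{i,j})=j a_{i+1,j-1}$, $D_3(a_{i,j})=j a_{i,j-1}$, $\hat D_1(a_{i,j})=(n-i-j)a_{i+1,j}$, $\hat D_2(a_{i,j})=i a_{i-1,j+1}$, $\hat D_3(a_{i,j})=(n-i-j)a_{i,j+1}$, $E_1(a_{i,j})=(n-2i-j)a_{i,j}$, $E_2(a_{i,j})=(i-j)a_{i,j}$. On the $u$'s (dual of the standard module, $x_1u_1+x_2u_2+x_3u_3$ invariant): $D_1=u_1\partial_{u_2}$, $D_2=u_2\partial_{u_3}$, $D_3=u_1\partial_{u_3}$, $\hat D_1=u_2\partial_{u_1}$, $\hat D_2=u_3\partial_{u_2}$, $\hat D_3=u_3\partial_{u_1}$, $E_1=u_1\partial_{u_1}-u_2\partial_{u_2}$, $E_2=u_2\partial_{u_2}-u_3\partial_{u_3}$.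 Isobaric means an eigenvector of both $E_1,E_2$; $\mathrm{ord}_i(a)=\max\{s\ge0:\hat D_i^s(a)\ne0\}$. ''Irreducible'' element of $\mathbb K[A]^{UT_3}$ is used in the classical sense (nonzero, not a polynomial in $UT_3$-invariants of smaller degree). A contravariant of order $d$ is an element of $\mathbb K[A,u_1,u_2,u_3]$ homogeneous of degree $d$ in the $u$'s and annihilated by all these derivations (equivalently $SL_3$-invariant). $\Gamma_{m_1,m_2}$ denotes the irreducible finite-dimensional $\mathfrak{sl}_3$-module of highest weight $[m_1,m_2]$. *)

From HB Require Import structures.
From mathcomp Require Import all_boot all_algebra.
From mathcomp Require Import mpoly.

Set Implicit Arguments.
Unset Strict Implicit.
Unset Printing Implicit Defensive.

Import GRing.Theory.
Local Open Scope ring_scope.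

(* Index set of the coefficients a_{i,j}, i + j <= n. *)
Notation AIdx n := {p : 'I_n.+1 * 'I_n.+1 | (p.1 + p.2 <= n)%N}.

Section Defs.
Variables (K : fieldType) (n : nat).

(* Variables of K[A, u1, u2, u3]: first the a_{i,j}, then u1, u2, u3. *)
Definition nv : nat := (#|{: AIdx n}| + 3)%N.
Definition KAu := {mpoly K[nv]}.

Definition avar (p : AIdx n) : 'I_nv := lshift 3 (enum_rank p).
Definition uvar (k : 'I_3) : 'I_nv := rshift #|{: AIdx n}| k.

(* a_{i,j} as a polynomial; 0 when i + j > n (negative indices never occur
   below, since they only appear with coefficient 0). *)
Definition aX (i j : nat) : KAu :=
  if (i + j <= n)%N then
    match (insub (inord i, inord j) : option (AIdx n)) with
    | Some p => 'X_(avar p)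
    | None => 0
    end
  else 0.

Definition uX (k : 'I_3) : KAu := 'X_(uvar k).
Definition u1 : KAu := uX 0.
Definition u2 : KAu := uX 1.
Definition u3 : KAu := uX 2.

Definition gen_img (fa : nat -> nat -> KAu) (fu : 'I_3 -> KAu) (k : 'I_nv) : KAu :=
  match split (k : 'I_(#|{: AIdx n}| + 3)) with
  | inl r => let p := enum_val r in fa (val (val p).1) (val (val p).2)
  | inr s => fu s
  end.

Definition der (fa : nat -> nat -> KAu) (fu : 'I_3 -> KAu) (p : KAu) : KAu :=
  \sum_(k < nv) gen_img fa fu k * mderiv k p.

Definition sc (c : nat) (q : KAu) : KAu := (c%:R : K) *: q.
Definition scz (c : int) (q : KAu) : KAu := (c%:~R : K) *: q.

(* E_{12}, E_{23}, E_{13} *)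
Definition D1 := der (fun i j => sc i (aX i.-1 j))
  (fun s => if val s == 1%N then u1 else 0).
Definition D2 := der (fun i j => sc j (aX i.+1 j.-1))
  (fun s => if val s == 2%N then u2 else 0).
Definition D3 := der (fun i j => sc j (aX i j.-1))
  (fun s => if val s == 2%N then u1 else 0).
(* E_{21}, E_{32}, E_{31} *)
Definition hD1 := der (fun i j => sc (n - i - j) (aX i.+1 j))
  (fun s => if val s == 0%N then u2 else 0).
Definition hD2 := der (fun i j => sc i (aX i.-1 j.+1))
  (fun s => if val s == 1%N then u3 else 0).
Definition hD3 := der (fun i j => sc (n - i - j) (aX i j.+1))
  (fun s => if val s == 0%N then u3 else 0).
(* E_{11}-E_{22}, E_{22}-E_{33} *)
Definition E1 := der (fun i j => scz (n%:Z - (2 * i)%N%:Z - j%:Z) (aX i j))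
  (fun s => if val s == 0%N then u1 else if val s == 1%N then - u2 else 0).
Definition E2 := der (fun i j => scz (i%:Z - j%:Z) (aX i j))
  (fun s => if val s == 1%N then u2 else if val s == 2%N then - u3 else 0).

Definition inKA (p : KAu) : Prop :=
  forall m, m \in msupp p -> forall k : 'I_3, m (uvar k) = 0%N.

Definition homogA (p : KAu) : Prop :=
  exists e : nat, forall m, m \in msupp p ->
    (\sum_(q : AIdx n) m (avar q))%N = e.

Definition homogU (d : nat) (p : KAu) : Prop :=
  forall m, m \in msupp p -> (\sum_(k < 3) m (uvar k))%N = d.

Definition isobaric (p : KAu) : Prop :=
  p != 0 /\ exists l1 l2 : K, E1 p = l1 *: p /\ E2 p = l2 *: p.

Definition UTinv (p : KAu) : Prop := D1 p = 0 /\ D2 p = 0 /\ D3 p = 0.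

Inductive in_alg (S : KAu -> Prop) : KAu -> Prop :=
| alg_const c : in_alg S (c%:MP)
| alg_gen s : S s -> in_alg S s
| alg_add p q : in_alg S p -> in_alg S q -> in_alg S (p + q)
| alg_mul p q : in_alg S p -> in_alg S q -> in_alg S (p * q).

(* irreducible element of K[A]^{UT_3} (classical sense): nonzero and not a
   polynomial in UT_3-invariants (of K[A]) of smaller degree. *)
Definition irreducible_inv (a : KAu) : Prop :=
  a != 0 /\
  ~ in_alg (fun b => inKA b /\ UTinv b /\ (msize b < msize a)%N) a.

Definition is_ord (D : KAu -> KAu) (a : KAu) (s : nat) : Prop :=
  iter s D a != 0 /\ forall t, (s < t)%N -> iter t D a = 0.

Definition subspace (W : KAu -> Prop) : Prop :=
  W 0 /\ (forall p q, W p -> W q -> W (p + q)) /\ (forall (c : K) p, W p -> W (c *: p)).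

Definition span (s : seq KAu) (p : KAu) : Prop :=
  exists c : 'I_(size s) -> K, p = \sum_(i < size s) c i *: s`_i.

Definition sl3_stable (W : KAu -> Prop) : Prop :=
  forall p, W p ->
    W (D1 p) /\ W (D2 p) /\ W (D3 p) /\ W (hD1 p) /\ W (hD2 p) /\ W (hD3 p) /\
    W (E1 p) /\ W (E2 p).

Definition sl3_submodule (W : KAu -> Prop) : Prop := subspace W /\ sl3_stable W.

Definition sl3_irreducible (M : KAu -> Prop) : Prop :=
  (exists p, M p /\ p != 0) /\
  forall W, sl3_submodule W -> (forall p, W p -> M p) ->
    (forall p, W p -> p = 0) \/ (forall p, M p -> W p).

Definition highest_weight_vector (v : KAu) (m1 m2 : nat) : Prop :=
  v != 0 /\ D1 v = 0 /\ D2 v = 0 /\ D3 v = 0 /\ E1 v = (m1%:R : K) *: v /\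
  E2 v = (m2%:R : K) *: v.

(* M is an irreducible finite-dimensional sl_3-submodule isomorphic to
   Gamma_{m1,m2}, i.e. irreducible with highest weight [m1, m2]. *)
Definition irred_submodule_Gamma (M : KAu -> Prop) (m1 m2 : nat) : Prop :=
  [/\ sl3_submodule M,
      (exists s : seq KAu, forall p, M p <-> span s p),
      sl3_irreducible M
    & exists v, M v /\ highest_weight_vector v m1 m2].

Definition Cbar (a : KAu) (d : nat) (p : KAu) : Prop :=
  exists c : nat -> nat -> K,
    p = \sum_(i < d.+1) \sum_(j < d.+1 | (i + j <= d)%N)
          c i j *: (((-1) ^+ (i + j) / (d ^_ (i + j))%:R : K)
                    *: iter j hD2 (iter i hD3 a)).

Definition casimir (a : KAu) (d : nat) : KAu :=
  \sum_(i < d.+1) \sum_(j < d.+1 | (i + j <= d)%N)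
     (((-1) ^+ (i + j) / (i`! * j`!)%:R : K)
       *: (iter j hD2 (iter i hD3 a) * u3 ^+ (d - (i + j)) * u1 ^+ i * u2 ^+ j)).

Definition contravariant (d : nat) (p : KAu) : Prop :=
  homogU d p /\
  (D1 p = 0 /\ D2 p = 0 /\ D3 p = 0 /\ hD1 p = 0 /\ hD2 p = 0 /\ hD3 p = 0 /\
   E1 p = 0 /\ E2 p = 0).

End Defs.

(** The operators [D_i], [hD_i], [E_i] are derivations of K[A,u], and a derivation of a
    polynomial ring is determined by its values on the variables, so the sl_3 commutation
    relations between them reduce to identities on the generators a_{i,j} and u_k.
    Put v_{i,j} = hD_2^j hD_3^i a.  As a is killed by D_1, D_2, D_3, hD_1 and is an
    E_2-eigenvector, the relations give every operator as an explicit shift of the v_{i,j};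
    together with hD_2^{d+1} a = 0 they force the E_2-weight of a to be d and v_{i,j} = 0
    for i + j > d.  Hence the v_{i,j} span a module with highest weight vector a of weight
    [0,d].  It is irreducible: if (I,J) maximises i + j among the nonzero terms of an
    element, D_2^J D_3^I sends the element to a nonzero multiple of a.  In the Casimir
    element the coefficients (-1)^{i+j}/(i! j!) make the contributions of D_1, hD_1, D_2,
    hD_2 acting on v_{i,j} and on u_3^{d-i-j} u_1^i u_2^j cancel in pairs, and D_3, hD_3,
    E_1, E_2 are brackets of these four. *)

From HB Require Import structures.
From Pilot Require Import Defs.
From mathcomp Require Import all_boot all_algebra.
From mathcomp Require Import mpoly.
From mathcomp Require Import ring zify.
From Stdlib Require Import Classical FunctionalExtensionality PropExtensionality.

Set Implicit Arguments.
Unset Strict Implicit.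
Unset Printing Implicit Defensive.

Import GRing.Theory.
Local Open Scope ring_scope.

(** * Derivations of polynomial rings *)

Section Derivations.
Variables (R : comNzRingType) (m : nat).
Local Notation M := {mpoly R[m]}.
Implicit Types (p q : M) (f g h : {linear M -> M}).

Lemma mderiv_var (i j : 'I_m) : mderiv j ('X_i : M) = (i == j)%:R.
Proof.
rewrite mderivX mnm1E; case: eqP => [->|_]; last by rewrite scale0r.
have -> : (U_(j) - U_(j) = 0)%MM by apply/mnmP => l; rewrite mnmBE mnm0E subnn.
by rewrite mpolyX0 scale1r.
Qed.

Definition leibniz (f : M -> M) := forall p q, f (p * q) = f p * q + p * f q.

Lemma leibniz1 (f : M -> M) : leibniz f -> f 1 = 0.
Proof.
by move=> fM; have := fM 1 1; rewrite !mul1r mulr1 => h; apply: (addrI (f 1)); rewrite -h addr0.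
Qed.

Lemma leibnizX (f : M -> M) p k : leibniz f -> f (p ^+ k) = p ^+ k.-1 * f p *+ k.
Proof.
move=> fM; elim: k => [|[|k] IH]; first by rewrite expr0 leibniz1 ?mulr0n.
  by rewrite expr1 expr0 mul1r.
by rewrite exprS fM IH mulrnAr mulrA -exprS /= [f p * _]mulrC -mulrS.
Qed.

Lemma leibniz_sub f g : leibniz f -> leibniz g -> leibniz (f \- g).
Proof. by move=> fM gM p q /=; rewrite fM gM mulrBl mulrBr addrACA opprD. Qed.

Lemma leibniz_comm (f g : M -> M) : {morph f : p q / p + q} -> {morph g : p q / p + q} ->
  leibniz f -> leibniz g -> leibniz (fun p => f (g p) - g (f p)).
Proof.
by move=> fD gD fM gM p q; rewrite gM fM fD gD !fM !gM; ring.
Qed.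

Lemma leibniz_eq0 h : leibniz h -> (forall i, h 'X_i = 0) -> forall p, h p = 0.
Proof.
move=> hM hX p; elim/mpolyind: p => [|c mm p _ _ IH]; first exact: raddf0.
have hXm : h 'X_[mm] = 0.
  rewrite mpolyXE_id; elim/big_rec: _ => [|i x _ Hx]; first exact: leibniz1.
  by rewrite hM Hx leibnizX // hX !mulr0 mul0rn mul0r addr0.
(* [rewrite linearZ] does not match here: [mpolyind] states the scaling through another
   instance path of [R]; [etrans] lets unification reconcile the two. *)
by apply: etrans (linearP h c _ p) _; rewrite /= IH hXm scaler0 addr0.
Qed.

Lemma leibniz_eq f g : leibniz f -> leibniz g -> (forall i, f 'X_i = g 'X_i) -> f =1 g.
Proof.
move=> fM gM fgX p; apply/eqP; rewrite -subr_eq0; apply/eqP.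
by apply: (leibniz_eq0 (h := f \- g)) => [|i]; [exact: leibniz_sub | rewrite /= fgX subrr].
Qed.

Lemma bracket_eq f g h : leibniz f -> leibniz g -> leibniz h ->
  (forall i, f (g 'X_i) = g (f 'X_i) + h 'X_i) -> forall p, f (g p) = g (f p) + h p.
Proof.
move=> fM gM hM fghX p.
have <- /= : ((f \o g) \- (g \o f)) p = h p.
  apply: leibniz_eq hM _ p; first exact: leibniz_comm (raddfD f) (raddfD g) fM gM.
  by move=> i /=; rewrite fghX addrC addKr.
by rewrite addrC subrK.
Qed.

End Derivations.

(** * The sl_3 action on K[A,u] *)

Section Generators.
Variables (K : fieldType) (n : nat).
Local Notation P := (KAu K n).
Local Notation aX := (aX K n).
Local Notation uX := (uX K n).
Implicit Types (fa : nat -> nat -> P) (fu : 'I_3 -> P).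

Lemma der_is_linear fa fu : linear (der fa fu).
Proof.
move=> c p q; rewrite /der scaler_sumr -big_split /=; apply: eq_bigr => k _.
by rewrite linearP /= mulrDr scalerAr.
Qed.

HB.instance Definition _ fa fu :=
  GRing.isLinear.Build K P P *:%R (der fa fu) (der_is_linear fa fu).

Lemma der_leibniz fa fu : leibniz (der fa fu).
Proof.
rewrite /leibniz => p q; rewrite /der mulr_suml mulr_sumr -big_split /=; apply: eq_bigr => k _.
by rewrite mderivM; ring.
Qed.

Lemma der_var fa fu k : der fa fu 'X_k = gen_img fa fu k.
Proof.
rewrite /der (bigD1 k) //= mderiv_var eqxx mulr1 big1 ?addr0 // => l /negPf kl.
by rewrite mderiv_var eq_sym kl mulr0.
Qed.

Lemma var_cases (k : 'I_(nv n)) : (exists p, k = avar p) \/ (exists s, k = uvar n s).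
Proof.
rewrite -[k]splitK; case: (split k) => [r|s]; [left|right]; last by exists s.
by exists (enum_val r); rewrite /avar enum_valK.
Qed.

Lemma X_avar (p : AIdx n) : 'X_(avar p) = aX (val (val p).1) (val (val p).2).
Proof.
rewrite /aX (valP p); case: insubP => [q _ qE|]; last by rewrite !inord_val (valP p).
by congr 'X_(avar _); apply: val_inj; rewrite qE !inord_val; case: (val p).
Qed.

Lemma aX_out i j : ~~ (i + j <= n)%N -> aX i j = 0.
Proof. by rewrite /aX => /negPf ->. Qed.

Lemma gen_img_avar fa fu p : gen_img fa fu (avar p) = fa (val (val p).1) (val (val p).2).
Proof.
by rewrite /gen_img /avar -[lshift _ _]/(unsplit (inl (enum_rank p))) unsplitK enum_rankK.
Qed.

Lemma aX_avar i j : (i + j <= n)%N ->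
  exists r : AIdx n, [/\ aX i j = 'X_(avar r), val (val r).1 = i & val (val r).2 = j].
Proof.
move=> hij; have [hi hj] : (i < n.+1)%N /\ (j < n.+1)%N by lia.
pose r : AIdx n := Sub (Ordinal hi, Ordinal hj) hij.
by exists r; rewrite X_avar.
Qed.

Lemma der_aX fa fu i j : der fa fu (aX i j) = if (i + j <= n)%N then fa i j else 0.
Proof.
case: ifPn => [/aX_avar[r [-> <- <-]]|/aX_out ->]; last exact: raddf0.
by rewrite der_var gen_img_avar.
Qed.

Lemma der_uX fa fu s : der fa fu (uX s) = fu s.
Proof.
by rewrite /uX der_var /gen_img /uvar -[rshift _ _]/(unsplit (inr s)) unsplitK.
Qed.

Lemma bracket_on_generators (f g h : {linear P -> P}) :
  leibniz f -> leibniz g -> leibniz h ->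
  (forall i j, (i + j <= n)%N -> f (g (aX i j)) = g (f (aX i j)) + h (aX i j)) ->
  (forall s, f (g (uX s)) = g (f (uX s)) + h (uX s)) ->
  forall p, f (g p) = g (f p) + h p.
Proof.
move=> fM gM hM onA onU; apply: bracket_eq => // k.
case: (var_cases k) => [[p ->]|[s ->]]; last exact: onU.
by rewrite X_avar; apply: onA; exact: (valP p).
Qed.

End Generators.

HB.instance Definition _ K n := GRing.Linear.copy (@D1 K n) (der _ _).
HB.instance Definition _ K n := GRing.Linear.copy (@D2 K n) (der _ _).
HB.instance Definition _ K n := GRing.Linear.copy (@D3 K n) (der _ _).
HB.instance Definition _ K n := GRing.Linear.copy (@hD1 K n) (der _ _).
HB.instance Definition _ K n := GRing.Linear.copy (@hD2 K n) (der _ _).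
HB.instance Definition _ K n := GRing.Linear.copy (@hD3 K n) (der _ _).
HB.instance Definition _ K n := GRing.Linear.copy (@E1 K n) (der _ _).
HB.instance Definition _ K n := GRing.Linear.copy (@E2 K n) (der _ _).

Lemma intr_congr (R : pzRingType) (x y : int) : x = y -> x%:~R = y%:~R :> R.
Proof. by move=> ->. Qed.

Lemma intr_eq0 (R : pzRingType) (x : int) : x = 0 -> x%:~R = 0 :> R.
Proof. by move=> ->. Qed.

Lemma scale_if (R : pzRingType) (V : lmodType R) (b : bool) (c : R) (v : V) :
  (if b then c *: v else 0) = (if b then c else 0) *: v.
Proof. by case: b; rewrite ?scale0r. Qed.

Lemma scale_by0 (R : pzRingType) (V : lmodType R) (c : R) (v : V) : c = 0 -> 0 = c *: v.
Proof. by move=> ->; rewrite scale0r. Qed.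

Ltac int_coeff_eq :=
  repeat (case: ifPn => ?);
  rewrite ?(mul0r, mulr0, add0r, addr0, mulr1, mul1r, mulN1r, mulrN1) //;
  rewrite ?pmulrn; do 3 rewrite -?intrM -?intrD -?intrB -?intrN;
  first [ apply: intr_congr | apply: intr_eq0 | apply/esym; apply: intr_eq0 ]; nia.

Ltac unfold_ops :=
  rewrite /Defs.D1 /Defs.D2 /Defs.D3 /Defs.hD1 /Defs.hD2 /Defs.hD3 /Defs.E1 /Defs.E2.

(* On a generator a_{i,j} both sides are multiples of one a_{i',j'} once i and j are split
   into zero and successor; the coefficients are compared in [int], where [nia] takes care
   of the range conditions i' + j' <= n. *)
Ltac bracket_on_aX :=
  let i := fresh "i" in let j := fresh "j" in let hij := fresh "hij" in
  move=> i j hij /=; unfold_ops; rewrite !der_aX hij /sc /scz;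
  rewrite !linearZ /= !der_aX ?scalerN -?scaleNr !scale_if !scalerA;
  case: i hij => [|i] hij; case: j hij => [|j] hij /=;
  rewrite ?(mulr0, mul0r, scale0r, addr0, add0r) -?scalerDl;
  first [ done | congr (_ *: _); int_coeff_eq
        | apply: scale_by0; int_coeff_eq | apply/esym; apply: scale_by0; int_coeff_eq ].

Ltac bracket_on_uX :=
  case=> [[|[|[|//]]] ?] /=; unfold_ops; rewrite !der_uX /= /u1 /u2 /u3;
  rewrite ?raddf0 ?raddfN /= ?der_uX /= ?scaleNr ?scaler_nat; ring.

Section Brackets.
Variables (K : fieldType) (n : nat).
Local Notation P := (KAu K n).
Local Notation D1 := (@D1 K n).
Local Notation D2 := (@D2 K n).
Local Notation D3 := (@D3 K n).
Local Notation hD1 := (@hD1 K n).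
Local Notation hD2 := (@hD2 K n).
Local Notation hD3 := (@hD3 K n).
Local Notation E1 := (@E1 K n).
Local Notation E2 := (@E2 K n).
Implicit Types (f g : {linear P -> P}).

Lemma leibniz_null : leibniz (\0 : P -> P).
Proof. by move=> p q /=; rewrite mulr0 mul0r addr0. Qed.

Lemma leibniz_opp f : leibniz f -> leibniz (\- f).
Proof. by move=> fM p q /=; rewrite fM opprD mulNr mulrN. Qed.

Lemma leibniz_add f g : leibniz f -> leibniz g -> leibniz (f \+ g).
Proof. by move=> fM gM p q /=; rewrite fM gM mulrDl mulrDr addrACA. Qed.

Lemma leibniz_scale (c : K) f : leibniz f -> leibniz (c \*: f).
Proof. by move=> fM p q /=; rewrite fM scalerDr scalerAl scalerAr. Qed.

Ltac by_generators :=
  do ![ exact: der_leibniz | exact: leibniz_null | apply: leibniz_opp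
      | apply: leibniz_add | apply: leibniz_scale | bracket_on_aX | bracket_on_uX ].

Lemma bracket_hD2_hD3 p : hD2 (hD3 p) = hD3 (hD2 p).
Proof. by rewrite -[RHS]addr0; apply: (bracket_on_generators (h := \0)); by_generators. Qed.

Lemma bracket_hD1_hD3 p : hD1 (hD3 p) = hD3 (hD1 p).
Proof. by rewrite -[RHS]addr0; apply: (bracket_on_generators (h := \0)); by_generators. Qed.

Lemma bracket_hD1_hD2 p : hD1 (hD2 p) = hD2 (hD1 p) - hD3 p.
Proof. by apply: (bracket_on_generators (h := \- hD3)); by_generators. Qed.

Lemma bracket_D1_hD3 p : D1 (hD3 p) = hD3 (D1 p) - hD2 p.
Proof. by apply: (bracket_on_generators (h := \- hD2)); by_generators. Qed.

Lemma bracket_D1_hD2 p : D1 (hD2 p) = hD2 (D1 p).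
Proof. by rewrite -[RHS]addr0; apply: (bracket_on_generators (h := \0)); by_generators. Qed.

Lemma bracket_D2_hD2 p : D2 (hD2 p) = hD2 (D2 p) + E2 p.
Proof. by apply: bracket_on_generators; by_generators. Qed.

Lemma bracket_D2_hD3 p : D2 (hD3 p) = hD3 (D2 p) + hD1 p.
Proof. by apply: bracket_on_generators; by_generators. Qed.

Lemma bracket_D3_hD3 p : D3 (hD3 p) = hD3 (D3 p) + (E1 p + E2 p).
Proof. by apply: (bracket_on_generators (h := E1 \+ E2)); by_generators. Qed.

Lemma bracket_D3_hD2 p : D3 (hD2 p) = hD2 (D3 p) + D1 p.
Proof. by apply: bracket_on_generators; by_generators. Qed.

Lemma bracket_D1_hD1 p : D1 (hD1 p) = hD1 (D1 p) + E1 p.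
Proof. by apply: bracket_on_generators; by_generators. Qed.

Lemma bracket_E1_hD2 p : E1 (hD2 p) = hD2 (E1 p) + hD2 p.
Proof. by apply: bracket_on_generators; by_generators. Qed.

Lemma bracket_E1_hD3 p : E1 (hD3 p) = hD3 (E1 p) - hD3 p.
Proof. by apply: (bracket_on_generators (h := \- hD3)); by_generators. Qed.

Lemma bracket_E2_hD2 p : E2 (hD2 p) = hD2 (E2 p) + (-2) *: hD2 p.
Proof. by apply: (bracket_on_generators (h := (-2) \*: hD2)); by_generators. Qed.

Lemma bracket_E2_hD3 p : E2 (hD3 p) = hD3 (E2 p) - hD3 p.
Proof. by apply: (bracket_on_generators (h := \- hD3)); by_generators. Qed.

Lemma bracket_D1_D2 p : D1 (D2 p) = D2 (D1 p) + D3 p.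
Proof. by apply: bracket_on_generators; by_generators. Qed.

Lemma sl3_annihilated p : D1 p = 0 -> D2 p = 0 -> hD1 p = 0 -> hD2 p = 0 ->
  [/\ D3 p = 0, hD3 p = 0, E1 p = 0 & E2 p = 0].
Proof.
move=> D1p D2p hD1p hD2p; split.
- by have := bracket_D1_D2 p; rewrite D2p D1p !raddf0 add0r => <-.
- have := bracket_hD1_hD2 p; rewrite hD2p hD1p !raddf0 sub0r => /esym/eqP.
  by rewrite oppr_eq0 => /eqP.
- by have := bracket_D1_hD1 p; rewrite hD1p D1p !raddf0 add0r => <-.
- by have := bracket_D2_hD2 p; rewrite hD2p D2p !raddf0 add0r => <-.
Qed.

End Brackets.

Section SupportConditions.
Variables (R : nzRingType) (m : nat).
Implicit Types (Q : 'X_{1..m} -> Prop) (p q : {mpoly R[m]}).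

Definition supp_all Q p := forall mm, mm \in msupp p -> Q mm.

Lemma supp_all0 Q : supp_all Q 0.
Proof. by move=> mm; rewrite msupp0. Qed.

Lemma supp_allD Q p q : supp_all Q p -> supp_all Q q -> supp_all Q (p + q).
Proof. by move=> Qp Qq mm /msuppD_le; rewrite mem_cat => /orP[/Qp|/Qq]. Qed.

Lemma supp_allZ Q c p : supp_all Q p -> supp_all Q (c *: p).
Proof. by move=> Qp mm /msuppZ_le /Qp. Qed.

Lemma supp_all_sum Q (I : Type) (r : seq I) (P : pred I) (F : I -> {mpoly R[m]}) :
  (forall i, P i -> supp_all Q (F i)) -> supp_all Q (\sum_(i <- r | P i) F i).
Proof. by move=> QF; elim/big_ind: _ => //; [exact: supp_all0 | exact: supp_allD]. Qed.

End SupportConditions.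

Section PolynomialsInA.
Variables (K : fieldType) (n : nat).
Local Notation P := (KAu K n).
Implicit Types (p q : P) (fa : nat -> nat -> P) (fu : 'I_3 -> P).

Lemma avar_neq_uvar (r : AIdx n) s : (avar r == uvar n s) = false.
Proof.
by apply/negbTE; rewrite -val_eqE /= neq_ltn (leq_trans (ltn_ord (enum_rank r))) ?leq_addr.
Qed.

Lemma inKA0 : inKA (0 : P).
Proof. exact: supp_all0. Qed.

Lemma inKAZ c p : inKA p -> inKA (c *: p).
Proof. exact: supp_allZ. Qed.

Lemma inKAM p q : inKA p -> inKA q -> inKA (p * q).
Proof.
move=> Ap Aq mm /msuppM_le /allpairsP [[m1 m2] /= [h1 h2 ->]] s.
by rewrite mnmDE Ap // Aq.
Qed.

Lemma inKA_aX i j : inKA (aX K n i j).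
Proof.
case: (boolP (i + j <= n)%N) => [/(aX_avar K)[r [-> _ _]]|/aX_out ->]; last exact: inKA0.
by move=> mm; rewrite msuppX mem_seq1 => /eqP-> s; rewrite mnm1E avar_neq_uvar.
Qed.

Lemma inKA_mderiv k p : inKA p -> inKA (mderiv k p).
Proof.
move=> Ap mm; rewrite mcoeff_msupp mcoeff_mderiv => hm s.
have : (mm + U_(k))%MM \in msupp p.
  by rewrite mcoeff_msupp; apply: contraNN hm => /eqP->; rewrite mul0rn.
by move/Ap/(_ s); rewrite mnmDE; lia.
Qed.

Lemma mderiv_uvar_inKA s p : inKA p -> mderiv (uvar n s) p = 0.
Proof.
move=> Ap; apply/mpolyP => mm; rewrite mcoeff_mderiv mcoeff0.
have : (mm + U_(uvar n s))%MM \notin msupp p.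
  by apply/negP => /Ap/(_ s); rewrite mnmDE mnm1E eqxx; lia.
by rewrite -mcoeff_eq0 => /eqP->; rewrite mul0rn.
Qed.

Lemma inKA_der fa fu p : (forall i j, inKA (fa i j)) -> inKA p -> inKA (der fa fu p).
Proof.
move=> Afa Ap; apply: supp_all_sum => k _.
case: (var_cases k) => [[r ->]|[s ->]]; last by rewrite mderiv_uvar_inKA // mulr0; exact: inKA0.
by rewrite gen_img_avar; apply: inKAM => //; exact: inKA_mderiv.
Qed.

End PolynomialsInA.

Section TriangleSums.
Variable V : nmodType.
Implicit Types F G : nat -> nat -> V.

Definition tsum k F := \sum_(0 <= i < k) \sum_(0 <= j < (k - i)%N) F i j.

Lemma tsumD k F G : tsum k (fun i j => F i j + G i j) = tsum k F + tsum k G.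
Proof. by rewrite /tsum -big_split; apply: eq_bigr => i _; rewrite big_split. Qed.

Lemma eq_tsum k F G : (forall i j, (i + j < k)%N -> F i j = G i j) -> tsum k F = tsum k G.
Proof.
move=> FG; apply: eq_big_nat => i /andP[_ hi]; apply: eq_big_nat => j /andP[_ hj].
by apply: FG; lia.
Qed.

Lemma tsum_eq0 k F : (forall i j, (i + j < k)%N -> F i j = 0) -> tsum k F = 0.
Proof.
move=> F0; rewrite (eq_tsum F0) /tsum big1 // => i _; exact: big1.
Qed.

Lemma tsum_shift_i k F : (forall j, F 0 j = 0) -> tsum k.+1 F = tsum k (fun i j => F i.+1 j).
Proof. by move=> F0; rewrite /tsum big_nat_recl // big1 ?add0r // => j _; rewrite F0. Qed.

Lemma tsum_shift_j k F : (forall i, F i 0 = 0) -> tsum k.+1 F = tsum k (fun i j => F i j.+1).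
Proof.
move=> F0; rewrite /tsum big_nat_recr //= subSnn big_nat1 F0 addr0.
apply: eq_big_nat => i /andP[_ hi].
by rewrite subSn ?(ltnW hi) // big_nat_recl // F0 add0r.
Qed.

Lemma tsum_drop k F : (forall i, (i <= k)%N -> F i (k - i)%N = 0) -> tsum k.+1 F = tsum k F.
Proof.
move=> F0; have Fk0 : F k 0 = 0 by have := F0 k (leqnn k); rewrite subnn.
rewrite /tsum big_nat_recr //= subSnn big_nat1 Fk0 addr0.
apply: eq_big_nat => i /andP[_ hi].
by rewrite subSn ?(ltnW hi) // big_nat_recr //= F0 ?addr0 // ltnW.
Qed.

End TriangleSums.

Lemma iter_is_linear (R : pzRingType) (V : lmodType R) (f : {linear V -> V}) k :
  linear (iter k f).
Proof. by elim: k => [|k IH] c p q //=; rewrite IH linearP. Qed.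

HB.instance Definition _ (R : pzRingType) (V : lmodType R) (f : {linear V -> V}) k :=
  GRing.isLinear.Build R V V *:%R (iter k f) (iter_is_linear f k).

Lemma sum_nat_delta (R : pzRingType) (V : lmodType R) N m (F : nat -> V) :
  (m < N)%N -> \sum_(k < N) (k == m :> nat)%:R *: F k = F m.
Proof.
move=> hm; rewrite (bigD1 (Ordinal hm)) //= eqxx scale1r big1 ?addr0 // => k.
by rewrite -val_eqE /= => /negPf ->; rewrite scale0r.
Qed.

Section Subspaces.
Variables (K : fieldType) (n : nat).
Local Notation P := (KAu K n).
Implicit Types (W : P -> Prop) (s : seq P).

Lemma subspace_sum W (I : Type) (r : seq I) (Q : pred I) (F : I -> P) :
  subspace W -> (forall i, Q i -> W (F i)) -> W (\sum_(i <- r | Q i) F i).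
Proof. by move=> [W0 [WD _]] WF; elim/big_ind: _. Qed.

Lemma subspaceZ W c p : subspace W -> W p -> W (c *: p).
Proof. by case=> _ [_ WZ]; apply: WZ. Qed.

Lemma subspace_preim W (f : {linear P -> P}) : subspace W -> subspace (fun p => W (f p)).
Proof.
move=> [W0 [WD WZ]]; split; first by rewrite raddf0.
by split=> [p q Wp Wq | c p Wp]; [rewrite raddfD; apply: WD | rewrite linearZ; apply: WZ].
Qed.

Lemma subspace_span s : subspace (Defs.span s).
Proof.
split; first by exists (fun=> 0); rewrite big1 // => k _; rewrite scale0r.
split=> [p q [c ->] [c' ->] | c p [c' ->]].
  by exists (fun k => c k + c' k); rewrite -big_split; apply: eq_bigr => k _; rewrite scalerDl.
by exists (fun k => c * c' k); rewrite scaler_sumr; apply: eq_bigr => k _; rewrite scalerA.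
Qed.

Lemma span_mem s x : x \in s -> Defs.span s x.
Proof.
move=> xs; have ix : (index x s < size s)%N by rewrite index_mem.
exists (fun k => (k == Ordinal ix)%:R); rewrite (bigD1 (Ordinal ix)) //= nth_index //.
by rewrite eqxx scale1r big1 ?addr0 // => k /negPf ->; rewrite scale0r.
Qed.

Lemma span_min W s : subspace W -> (forall x, x \in s -> W x) -> forall p, Defs.span s p -> W p.
Proof.
move=> Wsub sW p [c ->]; apply: subspace_sum => // k _.
by apply: subspaceZ => //; apply/sW/mem_nth.
Qed.

End Subspaces.

Lemma iter_stable (T : Type) (W : T -> Prop) (f : T -> T) k p :
  (forall q, W q -> W (f q)) -> W p -> W (iter k f p).
Proof. by move=> fW Wp; elim: k => //= k; exact: fW. Qed.

Lemma iter_linear_shift (K : pzRingType) (V : lmodType K) (f : {linear V -> V})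
    (x : nat -> V) (c : nat -> K) :
  (forall k, f (x k) = c k *: x k.-1) ->
  forall t k, iter t f (x k) = (\prod_(s < t) c (k - s)%N) *: x (k - t)%N.
Proof.
move=> fx; elim=> [|t IH] k; first by rewrite big_ord0 scale1r subn0.
by rewrite iterS IH linearZ /= fx scalerA big_ord_recr /= subnS.
Qed.

(** * The module spanned by the lowerings of a *)

Section Lowering.
Variables (K : fieldType) (n : nat) (a : KAu K n).
Local Notation P := (KAu K n).
Local Notation D1 := (@D1 K n).
Local Notation D2 := (@D2 K n).
Local Notation D3 := (@D3 K n).
Local Notation hD1 := (@hD1 K n).
Local Notation hD2 := (@hD2 K n).
Local Notation hD3 := (@hD3 K n).
Local Notation E1 := (@E1 K n).
Local Notation E2 := (@E2 K n).

Hypotheses (hD1a : hD1 a = 0) (D1a : D1 a = 0) (D2a : D2 a = 0) (D3a : D3 a = 0).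
Variable l2 : K.
Hypothesis E2a : E2 a = l2 *: a.

Definition lowering i j := iter j hD2 (iter i hD3 a).
Local Notation v := lowering.
Arguments lowering : simpl never.

Lemma hD2_lowering i j : hD2 (v i j) = v i j.+1.
Proof. by []. Qed.

Lemma hD3_lowering i j : hD3 (v i j) = v i.+1 j.
Proof. by elim: j => [|j IH] //=; rewrite -bracket_hD2_hD3 IH. Qed.

Lemma E1a : E1 a = 0.
Proof. by have := bracket_D1_hD1 a; rewrite hD1a D1a !raddf0 add0r. Qed.

Lemma hD1_lowering0 i : hD1 (v i 0) = 0.
Proof. by elim: i => [|i IH] //; rewrite -hD3_lowering bracket_hD1_hD3 IH raddf0. Qed.

Lemma hD1_lowering i j : hD1 (v i j) = - j%:R *: v i.+1 j.-1.
Proof.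
elim: j => [|j IH]; first by rewrite hD1_lowering0 oppr0 scale0r.
rewrite -hD2_lowering bracket_hD1_hD2 IH linearZ /= hD3_lowering /=.
case: j {IH} => [|j]; first by rewrite oppr0 scale0r sub0r scaleNr scale1r.
by rewrite hD2_lowering -[X in _ - X]scale1r -scalerBl -natr1; congr (_ *: _); ring.
Qed.

Lemma E1_lowering i j : E1 (v i j) = (j%:R - i%:R) *: v i j.
Proof.
elim: j => [|j IH].
  elim: i => [|i IH]; first by rewrite E1a subrr scale0r.
  rewrite -hD3_lowering bracket_E1_hD3 IH linearZ /= hD3_lowering.
  by rewrite -[X in _ - X]scale1r -scalerBl -natr1; congr (_ *: _); ring.
rewrite -hD2_lowering bracket_E1_hD2 IH linearZ /=.
by rewrite -[X in _ + X]scale1r -scalerDl -natr1; congr (_ *: _); ring.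
Qed.

Lemma E2_lowering i j : E2 (v i j) = (l2 - i%:R - 2%:R * j%:R) *: v i j.
Proof.
elim: j => [|j IH].
  elim: i => [|i IH]; first by rewrite E2a !subr0 mulr0 subr0.
  rewrite -hD3_lowering bracket_E2_hD3 IH linearZ /= hD3_lowering.
  by rewrite -[X in _ - X]scale1r -scalerBl -natr1; congr (_ *: _); ring.
rewrite -hD2_lowering bracket_E2_hD2 IH linearZ /= -scalerDl -natr1; congr (_ *: _); ring.
Qed.

Lemma D1_lowering i j : D1 (v i j) = - i%:R *: v i.-1 j.+1.
Proof.
elim: j => [|j IH].
  elim: i => [|i IH]; first by rewrite D1a oppr0 scale0r.
  rewrite -hD3_lowering bracket_D1_hD3 IH linearZ /=.
  case: i {IH} => [|i]; first by rewrite oppr0 scale0r sub0r scaleNr scale1r.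
  rewrite hD3_lowering -[X in _ - X]scale1r -scalerBl -natr1; congr (_ *: _); ring.
by rewrite -hD2_lowering bracket_D1_hD2 IH linearZ /=.
Qed.

Lemma D2_lowering0 i : D2 (v i 0) = 0.
Proof.
elim: i => [|i IH]; first exact: D2a.
by rewrite -hD3_lowering bracket_D2_hD3 IH hD1_lowering0 raddf0 addr0.
Qed.

Lemma D2_lowering i j : D2 (v i j) = (j%:R * (l2 - i%:R - j%:R + 1)) *: v i j.-1.
Proof.
elim: j => [|j IH]; first by rewrite D2_lowering0 mul0r scale0r.
rewrite -hD2_lowering bracket_D2_hD2 IH linearZ /= E2_lowering /=.
case: j {IH} => [|j]; first by rewrite mul0r scale0r add0r; congr (_ *: _); ring.
by rewrite hD2_lowering -scalerDl -!natr1; congr (_ *: _); ring.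
Qed.

Lemma D3_lowering i j : D3 (v i j) = (i%:R * (l2 - i%:R - j%:R + 1)) *: v i.-1 j.
Proof.
elim: j => [|j IH].
  elim: i => [|i IH]; first by rewrite D3a mul0r scale0r.
  rewrite -hD3_lowering bracket_D3_hD3 IH linearZ /= E1_lowering E2_lowering /=.
  case: i {IH} => [|i]; first by rewrite mul0r scale0r add0r -scalerDl; congr (_ *: _); ring.
  by rewrite hD3_lowering -!scalerDl -!natr1; congr (_ *: _); ring.
rewrite -hD2_lowering bracket_D3_hD2 IH linearZ /= hD2_lowering D1_lowering -scalerDl -natr1.
by congr (_ *: _); ring.
Qed.

Lemma iter_D3_lowering t i j : iter t D3 (v i j) =
  (\prod_(s < t) ((i - s)%:R * (l2 - (i - s)%:R - j%:R + 1))) *: v (i - t) j.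
Proof. exact: (iter_linear_shift (x := v^~ j) (D3_lowering^~ j)). Qed.

Lemma iter_D2_lowering t i j : iter t D2 (v i j) =
  (\prod_(s < t) ((j - s)%:R * (l2 - i%:R - (j - s)%:R + 1))) *: v i (j - t).
Proof. exact: (iter_linear_shift (x := v i) (D2_lowering i)). Qed.

Variable d : nat.
Hypotheses (char0 : [pchar K] =i pred0) (top_eq0 : v 0 d.+1 = 0) (top_neq0 : v 0 d != 0).

Lemma natr_neq0 k : (0 < k)%N -> (k%:R : K) != 0.
Proof. by rewrite (pcharf0P K).1 // -lt0n. Qed.

Lemma l2E : l2 = d%:R.
Proof.
have /esym/eqP := D2_lowering 0 d.+1.
rewrite top_eq0 (raddf0 D2) scaler_eq0 (negPf top_neq0) orbF mulf_eq0.
rewrite (negPf (natr_neq0 (ltn0Sn d))) /= => /eqP vanish.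
by apply/eqP; rewrite -subr_eq0 -vanish -natr1; apply/eqP; ring.
Qed.

Lemma lowering_antidiag_eq0 i : (i <= d.+1)%N -> v i (d.+1 - i) = 0.
Proof.
elim: i => [|i IH] hi; first by rewrite subn0.
have /esym/eqP := hD1_lowering i (d.+1 - i); rewrite IH ?(ltnW hi) // raddf0.
by rewrite scaler_eq0 oppr_eq0 (negPf (natr_neq0 _)) -?subnS //; [move/eqP | lia].
Qed.

Lemma lowering_eq0 i j : (d < i + j)%N -> v i j = 0.
Proof.
move=> hij; have [k hk] : exists k, (i + j = d.+1 + k)%N by exists (i + j - d.+1)%N; lia.
elim: k i j hk {hij} => [|k IH] i j hk.
  have -> : j = (d.+1 - i)%N by lia.
  by rewrite lowering_antidiag_eq0 //; lia.
case: j hk => [|j] hk.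
  by case: i hk => [|i] hk //; rewrite -hD3_lowering IH ?raddf0 //; lia.
by rewrite -hD2_lowering IH ?raddf0 //; lia.
Qed.

Lemma a_neq0 : a != 0.
Proof. by apply: contraNneq top_neq0 => a0; rewrite /lowering /= a0 iter_fix ?raddf0. Qed.

Definition lowering_span p :=
  exists c : nat -> nat -> K, p = \sum_(i < d.+1) \sum_(j < d.+1) c i j *: v i j.
Local Notation L := lowering_span.

Lemma subspace_lowering_span : subspace L.
Proof.
split.
  by exists (fun _ _ => 0); rewrite big1 // => i _; rewrite big1 // => j _; rewrite scale0r.
split=> [p q [c ->] [c' ->] | k p [c ->]].
  exists (fun i j => c i j + c' i j); rewrite -big_split; apply: eq_bigr => i _.
  by rewrite -big_split; apply: eq_bigr => j _; rewrite scalerDl.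
exists (fun i j => k * c i j); rewrite scaler_sumr; apply: eq_bigr => i _.
by rewrite scaler_sumr; apply: eq_bigr => j _; rewrite scalerA.
Qed.

Lemma lowering_span_lowering i j : L (v i j).
Proof.
have [hij|/lowering_eq0 ->] := leqP (i + j) d; last by case: subspace_lowering_span.
have [hi hj] : (i < d.+1)%N /\ (j < d.+1)%N by lia.
exists (fun i' j' => (i' == i)%:R * (j' == j)%:R).
rewrite -(sum_nat_delta (fun i' => v i' j) hi); apply: eq_bigr => i' _.
by rewrite -(sum_nat_delta (v i') hj) scaler_sumr; apply: eq_bigr => j' _; rewrite scalerA.
Qed.

Lemma lowering_span_min W : subspace W -> (forall i j, W (v i j)) -> forall p, L p -> W p.
Proof.
by move=> Wsub Wv p [c ->]; do 2![apply: subspace_sum => // ? _]; apply: subspaceZ.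
Qed.

Lemma Cbar_lowering_span p : Cbar a d p <-> L p.
Proof.
have scale_neq0 i j : (i + j <= d)%N -> ((-1) ^+ (i + j) / (d ^_ (i + j))%:R : K) != 0.
  move=> hij; rewrite mulf_neq0 ?invr_eq0 ?natr_neq0 ?ffact_gt0 //.
  by rewrite expf_neq0 // oppr_eq0 oner_eq0.
split=> [[c ->]|[c ->]].
  have Lsub := subspace_lowering_span.
  do 2![apply: subspace_sum => // ? _].
  by do 2!apply: subspaceZ => //; exact: lowering_span_lowering.
exists (fun i j => c i j / ((-1) ^+ (i + j) / (d ^_ (i + j))%:R)).
apply: eq_bigr => i _; rewrite [RHS]big_mkcond; apply: eq_bigr => j _ /=.
case: ifPn => hij; first by rewrite scalerA mulfVK ?scale_neq0.
by rewrite lowering_eq0 ?scaler0 //; lia.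
Qed.

Lemma lowering_span_stable (f : {linear P -> P}) :
  (forall i j, L (f (v i j))) -> forall p, L p -> L (f p).
Proof. by apply: lowering_span_min; exact: subspace_preim subspace_lowering_span. Qed.

Lemma sl3_stable_lowering_span : sl3_stable L.
Proof.
have Lv := lowering_span_lowering.
have LZ c i j : L (c *: v i j) by apply: subspaceZ; [exact: subspace_lowering_span | exact: Lv].
move=> p Lp; repeat match goal with |- _ /\ _ => split end;
  apply: lowering_span_stable Lp => i j /=;
  rewrite ?D1_lowering ?D2_lowering ?D3_lowering ?hD1_lowering ?hD2_lowering ?hD3_lowering
    ?E1_lowering ?E2_lowering; first [exact: Lv | exact: LZ].
Qed.

Definition lowerings : seq P :=
  [seq v x.1 x.2 | x : 'I_d.+1 * 'I_d.+1 <- enum {: 'I_d.+1 * 'I_d.+1}].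

Lemma span_lowerings p : Defs.span lowerings p <-> L p.
Proof.
split; apply: span_min || apply: lowering_span_min;
  try exact: subspace_lowering_span; try exact: subspace_span.
  by move=> _ /mapP[x _ ->]; exact: lowering_span_lowering.
move=> i j; have [/andP[hi hj]|hij] := boolP ((i < d.+1) && (j < d.+1))%N.
  by apply/span_mem/mapP; exists (Ordinal hi, Ordinal hj); rewrite ?mem_enum.
by rewrite lowering_eq0; [case: (subspace_span lowerings) | lia].
Qed.

Lemma shifted_weight_neq0 x y : (x + y <= d)%N -> l2 - x%:R - y%:R + 1 != 0.
Proof.
move=> hxy; have -> : l2 - x%:R - y%:R + 1 = (d.+1 - x - y)%:R.
  by rewrite l2E !natrB ?leq_subRL; try lia; rewrite -natr1; ring.
by rewrite natr_neq0 //; lia.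
Qed.

Lemma iter_D2_D3_lowering_eq0 I J i j : ((i < I) || (j < J))%N ->
  iter J D2 (iter I D3 (v i j)) = 0.
Proof.
move=> hij; rewrite iter_D3_lowering linearZ /= iter_D2_lowering scalerA.
apply/eqP; rewrite scaler_eq0 mulf_eq0; apply/orP; left.
case/orP: hij => [hi|hj]; apply/orP; [left|right]; apply/prodf_eq0.
  by exists (Ordinal hi) => //; rewrite subnn mul0r.
by exists (Ordinal hj) => //; rewrite subnn mul0r.
Qed.

Lemma iter_D2_D3_lowering_top I J : (I + J <= d)%N ->
  exists2 k : K, k != 0 & iter J D2 (iter I D3 (v I J)) = k *: a.
Proof.
move=> hIJ; rewrite iter_D3_lowering linearZ /= iter_D2_lowering scalerA !subnn.
eexists; last reflexivity.
by apply: mulf_neq0; apply/prodf_neq0 => s _; have hs := ltn_ord s;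
  rewrite mulf_neq0 ?natr_neq0 ?shifted_weight_neq0 //; lia.
Qed.

Lemma submodule_contains_a W w : sl3_submodule W -> (forall p, W p -> L p) ->
  W w -> w != 0 -> W a.
Proof.
move=> [Wsub Wst] WL Ww wn0; have [c wE] := WL w Ww.
pose t (x : 'I_d.+1 * 'I_d.+1) := c x.1 x.2 *: v x.1 x.2.
have {}wE : w = \sum_x t x by rewrite wE pair_bigA.
have [x0 tx0] : exists x, t x != 0.
  apply/existsP; apply: contraNT wn0 => /existsPn t0.
  by rewrite wE big1 // => x _; apply/eqP/negbNE/t0.
have [[I J] /= tIJ IJmax] :=
  @arg_maxnP _ x0 (fun x => t x != 0) (fun x => (x.1 + x.2)%N) tx0.
have IJd : (I + J <= d)%N.
  by rewrite leqNgt; apply: contra tIJ => /lowering_eq0 vIJ; rewrite /t /= vIJ scaler0.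
have [k k0 topE] := iter_D2_D3_lowering_top IJd.
pose F : {linear P -> P} := iter J D2 \o iter I D3.
have FwE : F w = (c I J * k) *: a.
  rewrite wE linear_sum (bigD1 (I, J)) // big1 => [|[i j] ij_neq].
    by rewrite /= addr0 !linearZ /= topE scalerA.
  have [t0|tn0] := eqVneq (t (i, j)) 0; first by rewrite t0 raddf0.
  have /= hle := IJmax (i, j) tn0; rewrite xpair_eqE in ij_neq.
  rewrite !linearZ /= iter_D2_D3_lowering_eq0 ?scaler0 // !ltnNge -negb_and.
  by apply: contra ij_neq => /andP[hI hJ]; apply/andP; split; apply/eqP/ord_inj; lia.
have W_D2 q : W q -> W (D2 q) by move/Wst; tauto.
have W_D3 q : W q -> W (D3 q) by move/Wst; tauto.
have WFw : W (F w) := iter_stable J W_D2 (iter_stable I W_D3 Ww).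
have cIJ0 : c I J != 0 by apply: contraNneq tIJ => cIJ; rewrite /t /= cIJ scale0r.
have := subspaceZ (c I J * k)^-1 Wsub WFw.
by rewrite FwE scalerA mulVf ?scale1r // mulf_neq0.
Qed.

Lemma sl3_irreducible_lowering_span : sl3_irreducible L.
Proof.
split; first by exists a; split; [exact: (lowering_span_lowering 0 0) | exact: a_neq0].
move=> W Wmod WL; have [[w [Ww wn0]]|no_w] := classic (exists w, W w /\ w != 0).
  right; apply: lowering_span_min => [|i j]; first by case: Wmod.
  have [_ Wst] := Wmod; have Wa := submodule_contains_a Wmod WL Ww wn0.
  by apply: iter_stable (iter_stable _ _ Wa) => q /Wst; tauto.
by left=> p Wp; apply/eqP/negPn/negP => pn0; apply: no_w; exists p.
Qed.

Lemma lowering_span_Gamma : irred_submodule_Gamma L 0 d.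
Proof.
split.
- by split; [exact: subspace_lowering_span | exact: sl3_stable_lowering_span].
- by exists lowerings => p; rewrite span_lowerings.
- exact: sl3_irreducible_lowering_span.
exists a; split; first exact: (lowering_span_lowering 0 0).
by rewrite /highest_weight_vector a_neq0 D1a D2a D3a E1a E2a l2E scale0r.
Qed.

(** * The Casimir element *)

Local Notation u1 := (u1 K n).
Local Notation u2 := (u2 K n).
Local Notation u3 := (u3 K n).

Definition u_monomial i j : P := u3 ^+ (d - (i + j)) * u1 ^+ i * u2 ^+ j.

Ltac expand_u_monomial :=
  rewrite /u_monomial; unfold_ops; rewrite !der_leibniz !(leibnizX _ _ (der_leibniz _ _));
  rewrite !der_uX /=;
  rewrite ?(mulr0, mul0r, mul0rn, addr0, add0r).

Lemma D1_u_monomial0 i : D1 (u_monomial i 0) = 0.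
Proof. by expand_u_monomial. Qed.

Lemma D1_u_monomial i j : D1 (u_monomial i j.+1) = j.+1%:R *: u_monomial i.+1 j.
Proof.
expand_u_monomial; rewrite addnS addSn scaler_nat mulrnAr; congr (_ *+ _).
by rewrite exprS; ring.
Qed.

Lemma hD1_u_monomial0 j : hD1 (u_monomial 0 j) = 0.
Proof. by expand_u_monomial. Qed.

Lemma hD1_u_monomial i j : hD1 (u_monomial i.+1 j) = i.+1%:R *: u_monomial i j.+1.
Proof.
expand_u_monomial; rewrite addnS addSn scaler_nat mulrnAr mulrnAl; congr (_ *+ _).
by rewrite exprS; ring.
Qed.

Lemma D2_u_monomial i j : D2 (u_monomial i j) = (d - (i + j))%:R *: u_monomial i j.+1.
Proof.
expand_u_monomial; rewrite scaler_nat !mulrnAl; congr (_ *+ _).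
have -> : (d - (i + j)).-1 = (d - (i + j.+1))%N by lia.
by rewrite exprS; ring.
Qed.

Lemma hD2_u_monomial0 i : hD2 (u_monomial i 0) = 0.
Proof. by expand_u_monomial. Qed.

Lemma hD2_u_monomial i j : (i + j < d)%N -> hD2 (u_monomial i j.+1) = j.+1%:R *: u_monomial i j.
Proof.
move=> hij; expand_u_monomial; rewrite scaler_nat mulrnAr; congr (_ *+ _).
have -> : (d - (i + j))%N = (d - (i + j.+1)).+1 by lia.
by rewrite exprS; ring.
Qed.

Definition casimir_coef i j : K := (-1) ^+ (i + j) / (i`! * j`!)%:R.

Lemma fact_neq0 k : (k`!%:R : K) != 0.
Proof. by rewrite natr_neq0 ?fact_gt0. Qed.

Lemma casimir_coef_Sj i j : casimir_coef i j.+1 * j.+1%:R = - casimir_coef i j.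
Proof.
rewrite /casimir_coef addnS exprS factS !natrM -natr1.
by field; rewrite ?natr1 ?fact_neq0 ?natr_neq0.
Qed.

Lemma casimir_coef_Si i j : casimir_coef i.+1 j * i.+1%:R = - casimir_coef i j.
Proof.
rewrite /casimir_coef addSn exprS factS !natrM -natr1.
by field; rewrite ?natr1 ?fact_neq0 ?natr_neq0.
Qed.

Lemma casimirE : casimir a d = tsum d.+1 (fun i j => casimir_coef i j *: (v i j * u_monomial i j)).
Proof.
rewrite /casimir /tsum big_mkord; apply: eq_bigr => i _.
rewrite big_mkord.
rewrite (big_ord_widen d.+1 (fun j => casimir_coef i j *: (v i j * u_monomial i j)))
  ?leq_subr //.
apply: eq_big => [j|j _]; first by apply/idP/idP; lia.
by rewrite /u_monomial /casimir_coef /lowering !mulrA.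
Qed.

Lemma leibniz_casimir (f : {linear P -> P}) : leibniz f ->
  f (casimir a d) = tsum d.+1 (fun i j => casimir_coef i j *: (f (v i j) * u_monomial i j)) +
                    tsum d.+1 (fun i j => casimir_coef i j *: (v i j * f (u_monomial i j))).
Proof.
move=> fM; rewrite casimirE -tsumD /tsum raddf_sum; apply: eq_bigr => i _.
by rewrite raddf_sum; apply: eq_bigr => j _; rewrite -scalerDr -fM; apply: linearZ.
Qed.

Lemma D1_casimir : D1 (casimir a d) = 0.
Proof.
rewrite leibniz_casimir /=; last exact: der_leibniz.
rewrite tsum_shift_i => [|j]; last by rewrite D1_lowering oppr0 scale0r mul0r scaler0.
rewrite tsum_shift_j => [|i]; last by rewrite D1_u_monomial0 mulr0 scaler0.
rewrite -tsumD; apply: tsum_eq0 => i j _.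
rewrite D1_lowering D1_u_monomial /= -scalerAl -scalerAr !scalerA -scalerDl.
by rewrite mulrN casimir_coef_Si casimir_coef_Sj opprK addrN scale0r.
Qed.

Lemma hD1_casimir : hD1 (casimir a d) = 0.
Proof.
rewrite leibniz_casimir /=; last exact: der_leibniz.
rewrite tsum_shift_j => [|i]; last by rewrite hD1_lowering oppr0 scale0r mul0r scaler0.
rewrite tsum_shift_i => [|j]; last by rewrite hD1_u_monomial0 mulr0 scaler0.
rewrite -tsumD; apply: tsum_eq0 => i j _.
rewrite hD1_lowering hD1_u_monomial /= -scalerAl -scalerAr !scalerA -scalerDl.
by rewrite mulrN casimir_coef_Sj casimir_coef_Si opprK addrN scale0r.
Qed.

Lemma D2_casimir : D2 (casimir a d) = 0.
Proof.
rewrite leibniz_casimir /=; last exact: der_leibniz.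
rewrite tsum_shift_j => [|i]; last by rewrite D2_lowering mul0r scale0r mul0r scaler0.
rewrite [X in _ + X]tsum_drop => [|i hi]; last first.
  by rewrite D2_u_monomial subnKC // subnn scale0r mulr0 scaler0.
rewrite -tsumD; apply: tsum_eq0 => i j hij.
rewrite D2_lowering D2_u_monomial /= -scalerAl -scalerAr !scalerA -scalerDl l2E.
rewrite mulrA casimir_coef_Sj natrB; last by lia.
by rewrite natrD -natr1 [X in X *: _](_ : _ = 0) ?scale0r //; ring.
Qed.

Lemma hD2_casimir : hD2 (casimir a d) = 0.
Proof.
rewrite leibniz_casimir /=; last exact: der_leibniz.
rewrite tsum_drop => [|i hi]; last by rewrite hD2_lowering lowering_eq0 ?mul0r ?scaler0 //; lia.
rewrite tsum_shift_j => [|i]; last by rewrite hD2_u_monomial0 mulr0 scaler0.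
rewrite -tsumD; apply: tsum_eq0 => i j hij.
rewrite hD2_lowering hD2_u_monomial // -scalerAr !scalerA -scalerDl.
by rewrite casimir_coef_Sj addrN scale0r.
Qed.

Lemma inKA_lowering i j : inKA a -> inKA (v i j).
Proof.
move=> Aa; have Asc c i' j' : inKA (sc c (aX K n i' j')) by apply/inKAZ/inKA_aX.
by apply: iter_stable (iter_stable _ _ Aa) => p Ap; apply: inKA_der.
Qed.

Lemma u_monomial_X i j : u_monomial i j =
  'X_[U_(uvar n 2) *+ (d - (i + j)) + U_(uvar n 0) *+ i + U_(uvar n 1) *+ j].
Proof. by rewrite /u_monomial /Defs.u1 /Defs.u2 /Defs.u3 /uX !mpolyXD !mpolyXn. Qed.

Lemma homogU_u_monomial q i j : inKA q -> (i + j <= d)%N -> homogU d (q * u_monomial i j).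
Proof.
move=> Aq hij mm; rewrite u_monomial_X (perm_mem (msuppMX _ _)) => /mapP[x /Aq x0 ->].
under eq_bigr => s _ do rewrite mnmDE x0 addn0.
by rewrite !big_ord_recr big_ord0 /= !mnmDE !mulmnE !mnm1E !(inj_eq (@rshift_inj _ _)) /=; lia.
Qed.

Lemma homogU_casimir : inKA a -> homogU d (casimir a d).
Proof.
move=> Aa; rewrite casimirE /tsum big_seq; apply: supp_all_sum => i.
rewrite mem_index_iota big_seq => /andP[_ hi]; apply: supp_all_sum => j.
rewrite mem_index_iota => /andP[_ hj].
by apply: supp_allZ; apply: homogU_u_monomial; [exact: inKA_lowering | lia].
Qed.

Lemma casimir_contravariant : inKA a -> contravariant d (casimir a d).
Proof.
move=> Aa; have [D3c hD3c E1c E2c] :=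
  sl3_annihilated D1_casimir D2_casimir hD1_casimir hD2_casimir.
split; first exact: homogU_casimir.
by rewrite D1_casimir D2_casimir hD1_casimir hD2_casimir D3c hD3c E1c E2c.
Qed.

Lemma Cbar_Gamma : irred_submodule_Gamma (Cbar a d) 0 d.
Proof.
suff -> : Cbar a d = L by exact: lowering_span_Gamma.
apply: functional_extensionality => p.
by apply: propositional_extensionality; exact: Cbar_lowering_span.
Qed.

End Lowering.

Local Close Scope ring_scope.
Unset Implicit Arguments.
Set Strict Implicit.

Theorem mainTheorem7 (K : fieldType) (n d : nat) (a : KAu K n) :
  [pchar K]%R =i pred0 -> (0 < n)%N ->
  inKA a -> homogA a -> isobaric a -> UTinv a -> irreducible_inv a ->
  is_ord (@hD1 K n) a 0 -> is_ord (@hD2 K n) a d ->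
  irred_submodule_Gamma (Cbar a d) 0 d /\ contravariant d (casimir a d).
Proof.
move=> char0 _ Aa _ [_ [_ [l2 [_ E2a]]]] [D1a [D2a D3a]] _ [_ ord1] [top_neq0 ord2].
have hD1a : @hD1 K n a = 0%R := ord1 1 (ltnSn 0).
have top_eq0 : iter d.+1 (@hD2 K n) a = 0%R := ord2 d.+1 (ltnSn d).
split; [apply: Cbar_Gamma | apply: casimir_contravariant]; eassumption.
Qed.
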